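(* Let $f,g\in\mathcal{S}_d$ be such that $\hat{\mathbb{D}}_{\beta,d}(f,g)$ is finite for some $\beta>0$, and suppose that $S_f(x)\ll x^\alpha$. Then $S_g(x)\ll x^{\max(\alpha,\beta)}$.
   Context: $\mathcal{S}_d$ is the set of ''degree $d$'' multiplicative functions: those $f$ with $f=f_1*\cdots*f_d$, where each $f_i$ is a completely multiplicative function with $|f_i(n)|\le1$ for all $n$, and $(a*b)(n)=\sum_{dm=n}a(d)b(m)$. $S_f(x):=\sum_{n\le x}f(n)$. $\hat{\mathbb{D}}_{\beta,k}(f,g):=\sum_p\sum_{j=1}^k\frac{|f(p^j)-g(p^j)|}{p^{j\beta}}$ (sum over primes). *)

From HB Require Import structures.
From mathcomp Require Import all_boot all_order all_algebra.
From mathcomp Require Import complex.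
From mathcomp Require Import all_classical all_reals all_analysis.
Set Implicit Arguments. Unset Strict Implicit. Unset Printing Implicit Defensive.
Import Order.TTheory GRing.Theory Num.Theory ComplexField.
Local Open Scope ring_scope.

Section Defs.
Variable R : realType.

(* arithmetic functions: only the values at n >= 1 matter *)
Definition arith := nat -> R[i].

Definition dconv (a b : arith) : arith :=
  fun n => \sum_(k < n.+1 | (0 < k)%N && (k %| n)%N) a k * b (n %/ k)%N.

Definition dunit : arith := fun n => (n == 1)%:R.

Definition cmod (z : R[i]) : R := ComplexField.Normc.normc z.

Definition completely_multiplicative (f : arith) : Prop :=
  f 1 = 1 /\ forall m n, (0 < m)%N -> (0 < n)%N -> f (m * n) = f m * f n.

Definition in_S (d : nat) (f : arith) : Prop :=
  exists F : 'I_d -> arith,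
    (forall i, completely_multiplicative (F i)) /\
    (forall i n, (0 < n)%N -> cmod (F i n) <= 1) /\
    (forall n, (0 < n)%N -> f n = (\big[dconv/dunit]_(i < d) F i) n).

Definition Ssum (f : arith) (x : R) : R[i] :=
  \sum_(1 <= n < `|Num.floor x|%N.+1) f n.

Definition Dterm (beta : R) (k : nat) (f g : arith) (p : nat) : R :=
  \sum_(1 <= j < k.+1) cmod (f (p ^ j)%N - g (p ^ j)%N) / (p%:R `^ (j%:R * beta)).

(* the series over primes converges (nonnegative terms: bounded partial sums) *)
Definition Dhat_finite (beta : R) (k : nat) (f g : arith) : Prop :=
  exists M : R, forall N : nat, \sum_(p < N | prime p) Dterm beta k f g p <= M.

Definition Sbound (f : arith) (alpha : R) : Prop :=
  exists C : R, forall x : R, 1 <= x -> cmod (Ssum f x) <= C * x `^ alpha.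

End Defs.

From HB Require Import structures.
From mathcomp Require Import all_boot all_order all_algebra.
From mathcomp Require Import complex.
From mathcomp Require Import all_classical all_reals all_analysis.
From mathcomp Require Import ring lra.
Import Order.TTheory GRing.Theory Num.Theory ComplexField.
Local Open Scope ring_scope.

Set Implicit Arguments. Unset Strict Implicit. Unset Printing Implicit Defensive.

(* Write f = F_1 * ... * F_d and g = G_1 * ... * G_d with F_i, G_i completely
   multiplicative.  Then g = h * f for the multiplicative h whose local factor at
   p is E_F(X) L_G(X), where E_F(X) = prod_i (1 - F_i(p) X) and L_G = 1 / E_G.
   As E_F - E_G has degree at most d and E_F - E_G = E_F E_G (L_G - L_F) modulo
   X^(d+1), evaluating absolute coefficients at X = p^-beta gives
     sum_e |h(p^e)| p^(-e beta) <= 1 + K(d, beta) sum_(j <= d) |f(p^j) - g(p^j)| p^(-j beta),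
   so sum_n |h(n)| n^-beta <= exp (K Dhat(f, g)) by the Euler product.  Finally
   S_g(x) = sum_(a <= x) h(a) S_f(x / a) << x^max(alpha, beta) sum_a |h(a)| a^-beta. *)

Section Multiplicative.
Variable R : realType.
Implicit Types u v : arith R.

Lemma dconv_divisors u v n : (0 < n)%N ->
  dconv u v n = \sum_(k <- divisors n) u k * v (n %/ k)%N.
Proof.
move=> n_gt0; rewrite /dconv.
rewrite -(big_mkord (fun k => (0 < k) && (k %| n))%N (fun k => u k * v (n %/ k)%N)) -big_filter.
apply: perm_big; apply: uniq_perm; rewrite ?filter_uniq ?iota_uniq ?divisors_uniq //.
move=> k; rewrite mem_filter mem_iota -dvdn_divisors //.
apply/andP/idP => [[/andP[_ ->]]//|kn]; split; first by rewrite (dvdn_gt0 n_gt0 kn) kn.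
by rewrite subn0 add0n ltnS leq0n dvdn_leq.
Qed.

Lemma eq_dconv u v v' : (forall n, (0 < n)%N -> v n = v' n) ->
  forall n, (0 < n)%N -> dconv u v n = dconv u v' n.
Proof.
move=> vv' n n_gt0; rewrite !dconv_divisors // !big_seq; apply: eq_bigr => k.
rewrite -dvdn_divisors // => kn.
by rewrite vv' // divn_gt0 (dvdn_gt0 n_gt0 kn, dvdn_leq n_gt0 kn).
Qed.

Lemma dconv_pfactor u v p m : prime p ->
  dconv u v (p ^ m)%N = \sum_(j < m.+1) u (p ^ j)%N * v (p ^ (m - j))%N.
Proof.
move=> p_pr; have p_gt0 := prime_gt0 p_pr.
rewrite dconv_divisors ?expn_gt0 ?p_gt0 //.
rewrite (perm_big [seq (p ^ j)%N | j <- iota 0 m.+1]); last first.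
  apply: uniq_perm; rewrite ?divisors_uniq //.
    by rewrite map_inj_uniq ?iota_uniq //; apply: expnI (prime_gt1 p_pr).
  move=> k; rewrite -dvdn_divisors ?expn_gt0 ?p_gt0 //.
  apply/idP/mapP => [/(dvdn_pfactor _ _ p_pr)[j jm ->]|[j]].
    by exists j; rewrite // mem_iota add0n ltnS.
  by rewrite mem_iota add0n ltnS => /andP[_ jm] ->; apply/dvdn_pfactor => //; exists j.
rewrite big_map -(big_mkord xpredT (fun j => u (p ^ j)%N * v (p ^ (m - j))%N)).
rewrite /index_iota subn0; apply: eq_big_seq => j; rewrite mem_iota add0n ltnS.
by case/andP=> _ jm; rewrite -expnB.
Qed.

Definition is_multiplicative u := u 1%N = 1 /\
  forall m n, (0 < m)%N -> (0 < n)%N -> coprime m n -> u (m * n)%N = u m * u n.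

Lemma cm_multiplicative u : completely_multiplicative u -> is_multiplicative u.
Proof. by case=> u1 uM; split=> // m n m_gt0 n_gt0 _; apply: uM. Qed.

Lemma cm_pfactor u p j : (0 < p)%N -> completely_multiplicative u ->
  u (p ^ j)%N = u p ^+ j.
Proof.
move=> p_gt0 [u1 uM]; elim: j => [|j IHj]; first by rewrite expn0 u1 expr0.
by rewrite expnS uM ?expn_gt0 ?p_gt0 // IHj exprS.
Qed.

Lemma multiplicative_dunit : is_multiplicative (@dunit R).
Proof.
split=> [|m n _ _ _]; first by rewrite /dunit eqxx.
by rewrite /dunit muln_eq1; case: (m == 1%N); case: (n == 1%N); rewrite ?mulr1 ?mulr0.
Qed.

Lemma dvdn_coprime_mul_gcd k m n : coprime m n -> (k %| m * n)%N ->
  k = (gcdn k m * gcdn k n)%N.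
Proof.
move=> cop_mn k_mn; apply/eqP; rewrite eqn_dvd; apply/andP; split.
  by rewrite muln_gcdl !muln_gcdr !dvdn_gcd k_mn ?(dvdn_mulr _ (dvdnn k)) ?(dvdn_mull _ (dvdnn k)).
rewrite Gauss_dvd ?dvdn_gcdl //.
exact: coprime_dvdl (dvdn_gcdr _ _) (coprime_dvdr (dvdn_gcdr _ _) cop_mn).
Qed.

Lemma multiplicative_dconv u v :
  is_multiplicative u -> is_multiplicative v -> is_multiplicative (dconv u v).
Proof.
move=> [u1 uM] [v1 vM]; split.
  by rewrite dconv_divisors // [divisors 1]/= big_seq1 u1 divn1 v1 mulr1.
move=> m n m_gt0 n_gt0 cop_mn.
have mn_gt0 : (0 < m * n)%N by rewrite muln_gt0 m_gt0.
rewrite !dconv_divisors //.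
rewrite (perm_big [seq (a * b)%N | a <- divisors m, b <- divisors n]); last first.
  apply: uniq_perm; rewrite ?divisors_uniq //.
    apply: allpairs_uniq; rewrite ?divisors_uniq //.
    move=> [a1 b1] [a2 b2] /allpairsP[[x1 y1] /= [x1m y1n [-> ->]]].
    move=> /allpairsP[[x2 y2] /= [x2m y2n [-> ->]]] /= e.
    move: x1m y1n x2m y2n; rewrite -!dvdn_divisors // => x1m y1n x2m y2n.
    have gcd_m x y : (x %| m)%N -> (y %| n)%N -> gcdn m (x * y) = x.
      by move=> xm yn; rewrite Gauss_gcdl ?(coprime_dvdr yn) //; apply/gcdn_idPr.
    have ex : x1 = x2 by rewrite -(gcd_m x1 y1) // e gcd_m.
    subst x2; congr pair; apply/eqP; rewrite -(eqn_pmul2l (dvdn_gt0 m_gt0 x1m)).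
    exact/eqP.
  move=> k; rewrite -dvdn_divisors //; apply/idP/allpairsP.
    move=> k_mn; exists (gcdn k m, gcdn k n); rewrite /= -!dvdn_divisors //.
    by rewrite !dvdn_gcdr; split=> //; apply: dvdn_coprime_mul_gcd.
  case=> [[a b] /= [am bn ->]]; move: am bn; rewrite -!dvdn_divisors //.
  exact: dvdn_mul.
rewrite big_allpairs_dep /= big_distrl /=; apply: eq_big_seq => a.
rewrite -dvdn_divisors // => am; rewrite big_distrr /=; apply: eq_big_seq => b.
rewrite -dvdn_divisors // => bn.
have a_gt0 := dvdn_gt0 m_gt0 am; have b_gt0 := dvdn_gt0 n_gt0 bn.
have cop_ab : coprime a b by apply: (coprime_dvdl am); apply: (coprime_dvdr bn).
have -> : ((m * n) %/ (a * b) = (m %/ a) * (n %/ b))%N.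
  by rewrite -{1}(divnK am) -{1}(divnK bn) mulnACA mulnK // muln_gt0 a_gt0.
rewrite uM // vM; first by rewrite mulrACA.
- by rewrite divn_gt0 // dvdn_leq.
- by rewrite divn_gt0 // dvdn_leq.
- by apply: (coprime_dvdl (dvdn_div am)); apply: (coprime_dvdr (dvdn_div bn)).
Qed.

Definition dconv_prod d (F : 'I_d -> arith R) := \big[@dconv R/@dunit R]_(i < d) F i.

Lemma multiplicative_dconv_prod d (F : 'I_d -> arith R) :
  (forall i, completely_multiplicative (F i)) -> is_multiplicative (dconv_prod F).
Proof.
move=> F_cm; apply: (big_ind is_multiplicative).
- exact: multiplicative_dunit.
- exact: multiplicative_dconv.
- by move=> i _; apply: cm_multiplicative.
Qed.

Lemma logn_nonprime p n : ~~ prime p -> logn p n = 0%N.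
Proof. by move=> p_npr; apply/eqP; rewrite -leqn0 leqNgt logn_gt0 mem_primes (negbTE p_npr). Qed.

Lemma logn_small p n : (0 < n)%N -> (n < p)%N -> logn p n = 0%N.
Proof.
move=> n_gt0 np; apply/eqP; rewrite -leqn0 leqNgt logn_gt0 mem_primes n_gt0 /=.
by apply/negP => /andP[_ /(dvdn_leq n_gt0)]; rewrite leqNgt np.
Qed.

Lemma prod_pfactor_logn n N : (0 < n)%N -> (n < N)%N ->
  (\prod_(p < N) p ^ logn p n)%N = n.
Proof.
move=> n_gt0 nN; rewrite -{2}(partnT n_gt0) /partn big_mkord.
rewrite (big_ord_widen N (fun p => p ^ logn p n)%N nN) [RHS]big_mkcond /=.
apply: eq_bigr => p _; case: ifP => // /negbT; rewrite -leqNgt => np.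
by rewrite logn_small // expn0.
Qed.

Lemma multiplicative_prod_pfactor u n N : is_multiplicative u -> (0 < n)%N ->
  u (\prod_(p < N) p ^ logn p n)%N = \prod_(p < N) u (p ^ logn p n)%N.
Proof.
move=> [u1 uM] n_gt0; elim: N => [|N IHN]; first by rewrite !big_ord0.
rewrite !big_ord_recr /= -IHN.
have [->|lg] := posnP (logn N n); first by rewrite expn0 muln1 u1 mulr1.
have N_pr : prime N by move: lg; rewrite logn_gt0 mem_primes => /andP[].
apply: uM; first by rewrite prodn_gt0 // => i; rewrite expn_gt0 prime_gt0 ?orbT.
  by rewrite expn_gt0 prime_gt0.
apply: (big_ind (fun x => coprime x (N ^ logn N n))); first exact: coprime1n.
  by move=> x y cx cy; rewrite coprimeMl cx cy.
move=> i _; have [->|li] := posnP (logn i n); first by rewrite expn0 coprime1n.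
have i_pr : prime i by move: li; rewrite logn_gt0 mem_primes => /andP[].
by rewrite coprime_pexpl // coprime_pexpr // prime_coprime // dvdn_prime2 // neq_ltn ltn_ord.
Qed.

Lemma multiplicative_prod_logn u n N : is_multiplicative u -> (0 < n)%N -> (n < N)%N ->
  u n = \prod_(p < N) u (p ^ logn p n)%N.
Proof. by move=> mu n_gt0 nN; rewrite -multiplicative_prod_pfactor // prod_pfactor_logn. Qed.

Lemma multiplicative_eq u v : is_multiplicative u -> is_multiplicative v ->
  (forall p e, prime p -> u (p ^ e)%N = v (p ^ e)%N) ->
  forall n, (0 < n)%N -> u n = v n.
Proof.
move=> mu mv uv n n_gt0.
rewrite (multiplicative_prod_logn mu n_gt0 (ltnSn n)) (multiplicative_prod_logn mv n_gt0 (ltnSn n)).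
apply: eq_bigr => p _; have [/uv//|p_npr] := boolP (prime p).
by rewrite logn_nonprime // expn0 mu.1 mv.1.
Qed.

End Multiplicative.

Section TruncatedPoly.
Variable K : nzRingType.
Implicit Types (a : K) (P Q : {poly K}).

Definition one_upto M P := forall k, (k <= M)%N -> P`_k = (k == 0%N)%:R.

Lemma coefM_one_upto M P Q : one_upto M Q ->
  forall k, (k <= M)%N -> (P * Q)`_k = P`_k.
Proof.
move=> Q1 k kM; rewrite coefM big_ord_recr /= subnn Q1 // mulr1.
rewrite big1 ?add0r // => j _; rewrite Q1; last exact: leq_trans (leq_subr _ _) kM.
by rewrite subn_eq0 leqNgt ltn_ord mulr0.
Qed.

Lemma one_upto_prod M I (r : seq I) (Pr : pred I) (F : I -> {poly K}) :
  (forall i, Pr i -> one_upto M (F i)) -> one_upto M (\prod_(i <- r | Pr i) F i).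
Proof.
move=> F1; apply: (big_ind (one_upto M)) => //; first by move=> k _; rewrite coef1.
by move=> P Q P1 Q1 k kM; rewrite (coefM_one_upto _ Q1) // P1.
Qed.

Definition geom_poly a M := \poly_(j < M.+1) a ^+ j.

Lemma one_upto_geom a M : one_upto M ((1 - a%:P * 'X) * geom_poly a M).
Proof.
move=> k kM; rewrite mulrBl mul1r -mulrA coefB coefCM coefXM /geom_poly !coef_poly.
rewrite ltnS kM; case: k kM => [|k] kM /=; first by rewrite expr0 mulr0 subr0.
by rewrite ltnS (ltnW kM) exprS subrr.
Qed.

Lemma size_linear_factor a : (size (1 - a%:P * 'X)%R <= 2)%N.
Proof.
apply/leq_sizeP => k k2; rewrite coefB coef1 coefCM coefX.
by case: k k2 => [|[|k]] //= _; rewrite mulr0 subr0.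
Qed.

Lemma size_prod_linear_factors n (a : 'I_n -> K) :
  (size (\prod_(i < n) (1 - (a i)%:P * 'X))%R <= n.+1)%N.
Proof.
elim: n a => [|n IHn] a; first by rewrite big_ord0 size_poly1.
rewrite big_ord_recr /= (leq_trans (size_polyMleq _ _)) //.
rewrite -subn1 leq_subLR add1n -addn2.
exact: leq_add (IHn _) (size_linear_factor _).
Qed.

End TruncatedPoly.

Section EulerFactors.
Variable R : realType.
Local Notation C := R[i].
Implicit Types (d : nat) (p : nat).

(* E_F(X), the inverse of the local Euler factor of [dconv_prod F] at p. *)
Definition euler_poly d (F : 'I_d -> arith R) p : {poly C} :=
  \prod_(i < d) (1 - (F i p)%:P * 'X).

(* L_F(X), the local Euler factor of [dconv_prod F] at p, truncated at degree M. *)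
Definition euler_series d (F : 'I_d -> arith R) p M : {poly C} :=
  \prod_(i < d) geom_poly (F i p) M.

Lemma one_upto_euler d (F : 'I_d -> arith R) p M :
  one_upto M (euler_poly F p * euler_series F p M).
Proof. by rewrite -big_split /=; apply: one_upto_prod => i _; apply: one_upto_geom. Qed.

Lemma coef0_euler_poly d (F : 'I_d -> arith R) p : (euler_poly F p)`_0 = 1.
Proof.
rewrite coef0_prod; apply: big1 => i _.
by rewrite coefB coef1 coefCM coefX mulr0 subr0.
Qed.

Lemma coef0_euler_series d (F : 'I_d -> arith R) p M : (euler_series F p M)`_0 = 1.
Proof. by rewrite coef0_prod; apply: big1 => i _; rewrite coef_poly expr0. Qed.

Lemma coef_euler_series d (F : 'I_d -> arith R) p m M :
  (forall i, completely_multiplicative (F i)) -> prime p -> (m <= M)%N ->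
  (euler_series F p M)`_m = dconv_prod F (p ^ m)%N.
Proof.
move=> F_cm p_pr; elim: d F F_cm m => [|d IHd] F F_cm m mM.
  rewrite /euler_series /dconv_prod !big_ord0 coef1 /dunit.
  by rewrite -(@eqn_exp2l p m 0 (prime_gt1 p_pr)) expn0.
rewrite /euler_series /dconv_prod !big_ord_recl /= dconv_pfactor // coefM.
apply: eq_bigr => j _.
have := IHd _ (fun i => F_cm (lift ord0 i)) (m - j)%N (leq_trans (leq_subr _ _) mM).
rewrite /euler_series /dconv_prod => ->.
rewrite (cm_pfactor _ (prime_gt0 p_pr) (F_cm ord0)) /geom_poly coef_poly ltnS.
by rewrite (leq_trans _ mM) // -ltnS.
Qed.

End EulerFactors.

Section DirichletQuotient.
Variable R : realType.
Local Notation C := R[i].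
Variable d : nat.
Variables F G : 'I_d -> arith R.
Hypothesis F_cm : forall i, completely_multiplicative (F i).
Hypothesis G_cm : forall i, completely_multiplicative (G i).

(* The coefficients of E_F(X) L_G(X), the local factor of h at p. *)
Definition dquot_local p e : C := (euler_poly F p * euler_series G p e)`_e.

(* The multiplicative h with h * (f_1 * ... * f_d) = g_1 * ... * g_d. *)
Definition dquot n : C := \prod_(p < n.+1) dquot_local p (logn p n).

Lemma dquot_local0 p : dquot_local p 0 = 1.
Proof. by rewrite /dquot_local coef0M coef0_euler_poly coef0_euler_series mulr1. Qed.

Lemma dquot_localE p e M : prime p -> (e <= M)%N ->
  dquot_local p e = (euler_poly F p * euler_series G p M)`_e.
Proof.
move=> p_pr eM; rewrite /dquot_local !coefM; apply: eq_bigr => k _.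
by rewrite !coef_euler_series ?leq_subr // (leq_trans (leq_subr _ _) eM).
Qed.

Lemma dquot_widen n N : (0 < n)%N -> (n < N)%N ->
  dquot n = \prod_(p < N) dquot_local p (logn p n).
Proof.
move=> n_gt0 nN; rewrite /dquot (big_ord_widen N (fun p => dquot_local p (logn p n)) nN).
rewrite [LHS]big_mkcond /=; apply: eq_bigr => p _; case: ifP => // /negbT.
by rewrite -leqNgt => np; rewrite logn_small // dquot_local0.
Qed.

Lemma multiplicative_dquot : is_multiplicative dquot.
Proof.
split; first by rewrite /dquot big1 // => p _; rewrite logn1 dquot_local0.
move=> m n m_gt0 n_gt0 cop_mn; have mn_gt0 : (0 < m * n)%N by rewrite muln_gt0 m_gt0.
rewrite (dquot_widen mn_gt0 (ltnSn _)) (@dquot_widen m (m * n).+1) ?ltnS ?leq_pmulr //.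
rewrite (@dquot_widen n (m * n).+1) ?ltnS ?leq_pmull // -big_split /=.
apply: eq_bigr => p _; rewrite lognM //.
have [->|lm] := posnP (logn p m); first by rewrite add0n dquot_local0 mul1r.
have [->|ln] := posnP (logn p n); first by rewrite addn0 dquot_local0 mulr1.
move: lm ln; rewrite !logn_gt0 !mem_primes => /and3P[p_pr _ pm] /and3P[_ _ pn].
have : (p %| gcdn m n)%N by rewrite dvdn_gcd pm pn.
by rewrite (eqP cop_mn) dvdn1 => /eqP p1; move: p_pr; rewrite p1.
Qed.

Lemma dquot_pfactor p e : prime p -> dquot (p ^ e)%N = dquot_local p e.
Proof.
move=> p_pr; have pe_gt0 : (0 < p ^ e)%N by rewrite expn_gt0 prime_gt0.
have peN : (p ^ e < (p ^ e + p).+1)%N by rewrite ltnS leq_addr.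
have pN : (p < (p ^ e + p).+1)%N by rewrite ltnS leq_addl.
rewrite (dquot_widen pe_gt0 peN).
rewrite (bigD1 (Ordinal pN)) //= big1 ?mulr1; last first.
  move=> q /eqP qp; rewrite lognX logn_prime //.
  by case: eqP => [e'|]; [case: qp; apply: val_inj | rewrite muln0 dquot_local0].
by rewrite lognX logn_prime // eqxx muln1.
Qed.

Lemma dconv_dquot_pfactor p e : prime p ->
  dconv dquot (dconv_prod F) (p ^ e)%N = dconv_prod G (p ^ e)%N.
Proof.
move=> p_pr; rewrite dconv_pfactor //.
transitivity ((euler_poly F p * euler_series G p e * euler_series F p e)`_e).
  rewrite coefM; apply: eq_bigr => j _.
  by rewrite dquot_pfactor // (dquot_localE p_pr (leq_ord j)) coef_euler_series ?leq_subr.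
rewrite mulrAC mulrC (coefM_one_upto _ (one_upto_euler F p (M := e))) //.
exact: coef_euler_series.
Qed.

Lemma dconv_dquot n : (0 < n)%N -> dconv dquot (dconv_prod F) n = dconv_prod G n.
Proof.
apply: multiplicative_eq; last exact: dconv_dquot_pfactor.
  exact: multiplicative_dconv multiplicative_dquot (multiplicative_dconv_prod F_cm).
exact: multiplicative_dconv_prod.
Qed.

End DirichletQuotient.

Section ComplexModulus.
Variable R : realType.
Local Notation C := R[i].
Implicit Types a b : C.

Lemma cmod_ge0 a : 0 <= cmod a.
Proof. by case: a => u v; rewrite /cmod sqrtr_ge0. Qed.

Lemma cmod0 : cmod (0 : C) = 0. Proof. exact: Normc.normc0. Qed.
Lemma cmod1 : cmod (1 : C) = 1. Proof. exact: Normc.normc1. Qed.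
Lemma cmodD a b : cmod (a + b) <= cmod a + cmod b. Proof. exact: le_normcD. Qed.
Lemma cmodM a b : cmod (a * b) = cmod a * cmod b. Proof. exact: Normc.normcM. Qed.
Lemma cmodN a : cmod (- a) = cmod a. Proof. exact: normcN. Qed.

Lemma cmodB a b : cmod (a - b) = cmod (b - a).
Proof. by rewrite -cmodN opprB. Qed.

Lemma cmod_nat_bool (c : bool) : cmod (c%:R : C) = c%:R.
Proof. by case: c; rewrite ?cmod1 ?cmod0. Qed.

Lemma cmodX a k : cmod (a ^+ k) = cmod a ^+ k.
Proof. by elim: k => [|k IHk]; rewrite ?expr0 ?cmod1 // !exprS cmodM IHk. Qed.

Lemma cmod_sum I (r : seq I) (P : pred I) (F : I -> C) :
  cmod (\sum_(i <- r | P i) F i) <= \sum_(i <- r | P i) cmod (F i).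
Proof.
elim/big_rec2: _ => [|i y1 y2 _ IH]; first by rewrite cmod0.
by apply: le_trans (cmodD _ _) _; rewrite lerD2l.
Qed.

Lemma cmod_prod I (r : seq I) (P : pred I) (F : I -> C) :
  cmod (\prod_(i <- r | P i) F i) = \prod_(i <- r | P i) cmod (F i).
Proof. by elim/big_rec2: _ => [|i y1 y2 _ IH]; rewrite ?cmod1 // cmodM IH. Qed.

End ComplexModulus.

Lemma sum_triangle (V : nmodType) (A : nat -> nat -> V) M :
  \sum_(k < M.+1) \sum_(j < k.+1) A j (k - j)%N =
  \sum_(j < M.+1) \sum_(l < M.+1 - j) A j l.
Proof.
elim: M => [|M IHM]; first by rewrite !big_ord1 /= subnn.
rewrite big_ord_recr /= IHM [RHS]big_ord_recr /= subSnn big_ord1.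
rewrite [in RHS](eq_bigr (fun j : 'I_M.+1 => \sum_(l < M.+1 - j) A j l + A j (M.+1 - j)%N)).
  by rewrite big_split /= -addrA; congr (_ + _); rewrite big_ord_recr /= subnn.
by move=> j _; rewrite subSn 1?ltnW // big_ord_recr.
Qed.

Section WeightedNorm.
Variable R : realType.
Local Notation C := R[i].
Variable x : R.
Hypothesis x_ge0 : 0 <= x.
Implicit Types P Q : {poly C}.

Definition wnorm M P : R := \sum_(k < M.+1) cmod P`_k * x ^+ k.

Lemma wnorm_ge0 M P : 0 <= wnorm M P.
Proof. by apply: sumr_ge0 => k _; rewrite mulr_ge0 ?exprn_ge0 ?cmod_ge0. Qed.

Lemma wnorm1 M : wnorm M 1 = 1.
Proof.
rewrite /wnorm big_ord_recl coef1 cmod1 expr0 mulr1 big1 ?addr0 // => k _.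
by rewrite coef1 cmod_nat_bool mul0r.
Qed.

Lemma eq_wnorm M P Q : (forall k, (k <= M)%N -> P`_k = Q`_k) -> wnorm M P = wnorm M Q.
Proof. by move=> PQ; apply: eq_bigr => k _; rewrite PQ // -ltnS. Qed.

Lemma wnormM M P Q : wnorm M (P * Q) <= wnorm M P * wnorm M Q.
Proof.
pose a j := cmod P`_j * x ^+ j; pose b l := cmod Q`_l * x ^+ l.
apply: (@le_trans _ _ (\sum_(k < M.+1) \sum_(j < k.+1) a j * b (k - j)%N)).
  apply: ler_sum => k _; rewrite coefM.
  apply: le_trans (ler_wpM2r (exprn_ge0 _ x_ge0) (cmod_sum _ _ _)) _.
  rewrite mulr_suml; apply: ler_sum => j _.
  by rewrite cmodM mulrACA -exprD subnKC // -ltnS.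
rewrite (sum_triangle (fun j l => a j * b l)) /wnorm mulr_suml.
apply: ler_sum => j _; rewrite mulr_sumr.
rewrite (big_ord_widen M.+1 (fun l => a j * b l)) ?leq_subr // [leLHS]big_mkcond /=.
apply: ler_sum => l _; case: ifP => // _.
by rewrite mulr_ge0 // mulr_ge0 ?exprn_ge0 ?cmod_ge0.
Qed.

Lemma wnorm_prod_le M n (P : 'I_n -> {poly C}) c :
  (forall i, wnorm M (P i) <= c) -> wnorm M (\prod_(i < n) P i) <= c ^+ n.
Proof.
elim: n P => [|n IHn] P Pc; first by rewrite big_ord0 wnorm1.
rewrite big_ord_recr exprSr /=; apply: le_trans (wnormM _ _ _) _.
by apply: ler_pM; rewrite ?wnorm_ge0 // IHn.
Qed.

Lemma wnorm_size_le M a P : (size P <= a.+1)%N -> wnorm M P <= wnorm a P.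
Proof.
move=> sP; have [aM|Ma] := leqP a M.
  rewrite /wnorm (big_ord_widen M.+1 (fun k => cmod P`_k * x ^+ k) (aM : (a.+1 <= M.+1)%N)) [leRHS]big_mkcond /=.
  rewrite le_eqVlt; apply/orP; left; apply/eqP; apply: eq_bigr => k _; case: ifP => // /negbT; rewrite -leqNgt => ak.
  by rewrite nth_default ?cmod0 ?mul0r // (leq_trans sP).
rewrite /wnorm (big_ord_widen a.+1 (fun k => cmod P`_k * x ^+ k) (ltnW Ma : (M.+1 <= a.+1)%N)) [leLHS]big_mkcond /=.
apply: ler_sum => k _; case: ifP => // _.
by rewrite mulr_ge0 ?exprn_ge0 ?cmod_ge0.
Qed.

Lemma geom_sum_le n : x < 1 -> \sum_(k < n) x ^+ k <= (1 - x)^-1.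
Proof.
move=> x_lt1; rewrite -[leRHS]mulr1 ler_pdivlMl ?subr_gt0 //.
by rewrite -opprB mulNr -subrX1 opprB gerBl exprn_ge0.
Qed.

Lemma wnorm_geom M M' (a : C) : x < 1 -> cmod a <= 1 ->
  wnorm M (geom_poly a M') <= (1 - x)^-1.
Proof.
move=> x_lt1 a_le1; apply: le_trans (geom_sum_le M.+1 x_lt1); apply: ler_sum => k _.
rewrite /geom_poly coef_poly; case: ifP => _; last by rewrite cmod0 mul0r exprn_ge0.
by rewrite cmodX ler_piMl ?exprn_ge0 // exprn_ile1 ?cmod_ge0.
Qed.

Lemma wnorm_linear_factor M (a : C) : x <= 1 -> cmod a <= 1 ->
  wnorm M (1 - a%:P * 'X) <= 2.
Proof.
move=> x_le1 a_le1; apply: le_trans (wnorm_size_le _ (size_linear_factor a)) _.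
rewrite /wnorm big_ord_recr big_ord1 /= expr0 expr1 mulr1.
have -> : (1 - a%:P * 'X)`_0 = 1 by rewrite coefB coef1 coefCM coefX mulr0 subr0.
have -> : (1 - a%:P * 'X)`_1 = - a by rewrite coefB coef1 coefCM coefX mulr1 sub0r.
by rewrite cmod1 cmodN; have := cmod_ge0 a; nra.
Qed.

Lemma wnorm_euler_poly M d (F : 'I_d -> arith R) p : x <= 1 ->
  (forall i, cmod (F i p) <= 1) -> wnorm M (euler_poly F p) <= 2 ^+ d.
Proof. by move=> x_le1 F_le1; apply: wnorm_prod_le => i; apply: wnorm_linear_factor. Qed.

Lemma wnorm_euler_series M M' d (F : 'I_d -> arith R) p : x < 1 ->
  (forall i, cmod (F i p) <= 1) -> wnorm M (euler_series F p M') <= ((1 - x)^-1) ^+ d.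
Proof. by move=> x_lt1 F_le1; apply: wnorm_prod_le => i; apply: wnorm_geom. Qed.

End WeightedNorm.

Section LocalBound.
Variable R : realType.
Variable d : nat.
Variables F G : 'I_d -> arith R.
Hypothesis F_cm : forall i, completely_multiplicative (F i).
Hypothesis G_cm : forall i, completely_multiplicative (G i).
Hypothesis F_le1 : forall i n, (0 < n)%N -> cmod (F i n) <= 1.
Hypothesis G_le1 : forall i n, (0 < n)%N -> cmod (G i n) <= 1.
Variable p : nat.
Hypothesis p_pr : prime p.
Variable x : R.
Hypotheses (x_ge0 : 0 <= x) (x_lt1 : x < 1).

Lemma dquot_local_sub e M : (e <= M)%N -> dquot_local F G p e =
  ((euler_poly F p - euler_poly G p) * euler_series G p M)`_e + (e == 0%N)%:R.
Proof.
move=> eM; rewrite mulrBl coefB -(one_upto_euler G p (M := M) eM) subrK.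
exact: dquot_localE.
Qed.

Lemma sum_dquot_local_le M :
  \sum_(e < M.+1) cmod (dquot_local F G p e) * x ^+ e <=
  1 + wnorm x M ((euler_poly F p - euler_poly G p) * euler_series G p M).
Proof.
rewrite -(wnorm1 x M) /wnorm -big_split /=; apply: ler_sum => e _.
rewrite (dquot_local_sub (leq_ord e)) coef1 -mulrDl ler_wpM2r ?exprn_ge0 // addrC.
exact: cmodD.
Qed.

Lemma wnorm_euler_series_sub :
  wnorm x d (euler_series G p d - euler_series F p d) =
  \sum_(1 <= j < d.+1) cmod (dconv_prod F (p ^ j)%N - dconv_prod G (p ^ j)%N) * x ^+ j.
Proof.
rewrite /wnorm big_ord_recl coefB !coef0_euler_series subrr cmod0 mul0r add0r.
rewrite big_add1 /= big_mkord; apply: eq_bigr => j _.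
by rewrite coefB !coef_euler_series // cmodB.
Qed.

Lemma wnorm_euler_poly_sub M : (d <= M)%N ->
  wnorm x M (euler_poly F p - euler_poly G p) <=
  2 ^+ d * 2 ^+ d * wnorm x d (euler_series G p d - euler_series F p d).
Proof.
move=> dM; set EF := euler_poly F p; set EG := euler_poly G p.
set SF := euler_series F p d; set SG := euler_series G p d.
have size_E : (size (EF - EG)%R <= d.+1)%N.
  by rewrite (leq_trans (size_polyD _ _)) // size_polyN geq_max !size_prod_linear_factors.
apply: le_trans (wnorm_size_le x_ge0 M size_E) _.
have -> : wnorm x d (EF - EG) = wnorm x d (EF * EG * (SG - SF)).
  apply: eq_wnorm => k kd.
  have -> : EF * EG * (SG - SF) = EF * (EG * SG) - EG * (EF * SF) by ring.
  by rewrite !coefB (coefM_one_upto _ (one_upto_euler G p (M := d))) //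
    (coefM_one_upto _ (one_upto_euler F p (M := d))).
have E_le (K : 'I_d -> arith R) : (forall i n, (0 < n)%N -> cmod (K i n) <= 1) ->
    wnorm x d (euler_poly K p) <= 2 ^+ d.
  by move=> K_le1; apply: (wnorm_euler_poly x_ge0) (ltW x_lt1) _ => i; apply: K_le1 (prime_gt0 p_pr).
apply: le_trans (wnormM x_ge0 _ _ _) _; apply: ler_wpM2r; first exact: wnorm_ge0.
apply: le_trans (wnormM x_ge0 _ _ _) _.
by apply: ler_pM; rewrite ?wnorm_ge0 ?E_le.
Qed.

Lemma sum_dquot_local_bound M : (d <= M)%N ->
  \sum_(e < M.+1) cmod (dquot_local F G p e) * x ^+ e <=
  1 + 2 ^+ d * 2 ^+ d * ((1 - x)^-1) ^+ d *
      \sum_(1 <= j < d.+1) cmod (dconv_prod F (p ^ j)%N - dconv_prod G (p ^ j)%N) * x ^+ j.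
Proof.
move=> dM; apply: le_trans (sum_dquot_local_le M) _; rewrite lerD2l.
apply: le_trans (wnormM x_ge0 _ _ _) _.
rewrite -wnorm_euler_series_sub mulrAC.
apply: ler_pM; rewrite ?wnorm_ge0 ?wnorm_euler_poly_sub //.
by apply: (wnorm_euler_series x_ge0) => // i; apply: G_le1 (prime_gt0 p_pr).
Qed.

End LocalBound.

Section RealPowers.
Variable R : realType.

Lemma powR_prod n (a : 'I_n -> R) (b : R) : (forall i, 0 <= a i) ->
  (\prod_(i < n) a i) `^ b = \prod_(i < n) a i `^ b.
Proof.
elim: n a => [|n IHn] a a_ge0; first by rewrite !big_ord0 powR1.
rewrite !big_ord_recr /= powRM; first by rewrite IHn // => i; apply: a_ge0.
  by apply: prodr_ge0 => i _; apply: a_ge0.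
exact: a_ge0.
Qed.

Lemma powR_exprn (a b : R) e : 0 <= a -> (a ^+ e) `^ b = (a `^ b) ^+ e.
Proof.
by move=> a_ge0; rewrite -powR_mulrn // -powRrM mulrC powRrM powR_mulrn ?powR_ge0.
Qed.

Lemma powR_invr (a b : R) : 0 <= a -> (a^-1) `^ b = (a `^ b)^-1.
Proof. by move=> a_ge0; rewrite -powR_inv1 // -powRrM mulN1r powRN. Qed.

End RealPowers.

Lemma logn_ltn p n : (0 < n)%N -> (logn p n < n.+1)%N.
Proof.
move=> n_gt0; have [p_pr|/logn_nonprime->//] := boolP (prime p).
rewrite ltnS; apply: leq_trans (dvdn_leq n_gt0 (pfactor_dvdnn p n)).
exact: ltnW (ltn_expl _ (prime_gt1 p_pr)).
Qed.

Section EulerProduct.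
Variable R : realType.
Variable beta : R.
Variable u : arith R.
Hypothesis u_mul : is_multiplicative u.

(* |u(p^e)| / p^(e beta), set to the weight of u(1) = 1 at non-primes p. *)
Definition pweight p e : R :=
  if prime p then cmod (u (p ^ e)%N) * ((p%:R `^ beta)^-1) ^+ e else (e == 0%N)%:R.

Lemma pweight_ge0 p e : 0 <= pweight p e.
Proof.
rewrite /pweight; case: ifP => _; last exact: ler0n.
by rewrite mulr_ge0 ?cmod_ge0 ?exprn_ge0 // invr_ge0 powR_ge0.
Qed.

Lemma scaled_term_prod n N : (0 < n)%N -> (n < N.+1)%N ->
  cmod (u n) * (n%:R `^ beta)^-1 = \prod_(p < N.+1) pweight p (logn p n).
Proof.
move=> n_gt0 nN; rewrite (multiplicative_prod_logn u_mul n_gt0 nN) cmod_prod.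
rewrite -{2}(prod_pfactor_logn n_gt0 nN) natr_prod powR_prod => [|i]; last exact: ler0n.
rewrite -prodfV -big_split /=; apply: eq_bigr => p _.
rewrite /pweight natrX powR_exprn ?ler0n // -exprVn; case: ifP => // /negbT p_npr.
by rewrite logn_nonprime // expn0 u_mul.1 cmod1 expr0 mulr1.
Qed.

(* Each n <= N is determined by its exponent vector (logn p n)_(p <= N). *)
Lemma sum_le_euler_product N :
  \sum_(n < N.+1 | (0 < n)%N) cmod (u n) * (n%:R `^ beta)^-1 <=
  \prod_(p < N.+1) \sum_(e < N.+1) pweight p e.
Proof.
pose W (phi : {ffun 'I_N.+1 -> 'I_N.+1}) := \prod_(p < N.+1) pweight p (phi p).
pose phi (n : 'I_N.+1) := [ffun p : 'I_N.+1 => (inord (logn p n) : 'I_N.+1)].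
have logn_le (n : 'I_N.+1) p : (0 < n)%N -> (logn p n <= N)%N.
  by move=> n_gt0; rewrite -ltnS; apply: leq_trans (logn_ltn p n_gt0) (ltn_ord n).
have phiE (n : 'I_N.+1) p : (0 < n)%N -> phi n p = logn p n :> nat.
  by move=> n_gt0; rewrite ffunE inordK // ltnS logn_le.
rewrite (eq_bigr (W \o phi)); last first.
  move=> n n_gt0; rewrite (scaled_term_prod n_gt0 (ltn_ord n)).
  by apply: eq_bigr => p _; rewrite phiE.
have phi_inj : {in [pred n : 'I_N.+1 | (0 < n)%N] &, injective phi}.
  move=> n1 n2; rewrite !inE => n1_gt0 n2_gt0 e12; apply: val_inj => /=.
  rewrite -(prod_pfactor_logn n1_gt0 (ltn_ord n1)) -(prod_pfactor_logn n2_gt0 (ltn_ord n2)).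
  by apply: eq_bigr => p _; rewrite -!phiE // e12.
rewrite bigA_distr_bigA /=.
rewrite (eq_bigl [in [pred n : 'I_N.+1 | (0 < n)%N]]) -?(big_imset _ phi_inj) //=.
rewrite [leRHS](bigID [in phi @: [pred n : 'I_N.+1 | (0 < n)%N]]) /= lerDl.
by apply: sumr_ge0 => psi _; apply: prodr_ge0 => p _; apply: pweight_ge0.
Qed.

End EulerProduct.

Lemma prod1D_le_expR (R : realType) n (a : 'I_n -> R) : (forall i, 0 <= a i) ->
  \prod_(i < n) (1 + a i) <= expR (\sum_(i < n) a i).
Proof.
move=> a_ge0; rewrite expR_sum; apply: ler_prod => i _.
by rewrite expR_ge1Dx andbT addr_ge0.
Qed.

Section DquotSeries.
Variable R : realType.
Variable d : nat.
Variables F G : 'I_d -> arith R.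
Hypothesis F_cm : forall i, completely_multiplicative (F i).
Hypothesis G_cm : forall i, completely_multiplicative (G i).
Hypothesis F_le1 : forall i n, (0 < n)%N -> cmod (F i n) <= 1.
Hypothesis G_le1 : forall i n, (0 < n)%N -> cmod (G i n) <= 1.
Variables (f g : arith R) (beta : R).
Hypothesis f_eq : forall n, (0 < n)%N -> f n = dconv_prod F n.
Hypothesis g_eq : forall n, (0 < n)%N -> g n = dconv_prod G n.
Hypothesis beta_gt0 : 0 < beta.

Let x2 : R := (2%:R `^ beta)^-1.
Let K : R := 2 ^+ d * 2 ^+ d * ((1 - x2)^-1) ^+ d.

Let one_lt_2powR : 1 < 2%:R `^ beta.
Proof.
have := @gt0_ltr_powR R beta beta_gt0 1 2%:R; rewrite powR1 => ->.
all: by rewrite ?nnegrE ?ler0n ?ltr1n.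
Qed.

Let x2_lt1 : x2 < 1.
Proof. by rewrite invf_lt1 ?one_lt_2powR ?(lt_trans ltr01 one_lt_2powR). Qed.

Let pinv_bounds p : prime p -> 0 <= (p%:R `^ beta)^-1 <= x2.
Proof.
move=> p_pr; rewrite invr_ge0 powR_ge0 lef_pV2 ?posrE ?powR_gt0 ?ltr0n ?prime_gt0 //.
by rewrite ge0_ler_powR ?nnegrE ?ler0n ?ler_nat ?prime_gt1 ?ltW.
Qed.

Let K_ge0 : 0 <= K.
Proof. by rewrite !mulr_ge0 ?exprn_ge0 // invr_ge0 subr_ge0 ltW. Qed.

Let Dterm_ge0 p : 0 <= Dterm beta d f g p.
Proof. by apply: sumr_ge0 => j _; rewrite divr_ge0 ?cmod_ge0 ?powR_ge0. Qed.

Lemma Dterm_dconv_prod p : prime p -> Dterm beta d f g p =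
  \sum_(1 <= j < d.+1) cmod (dconv_prod F (p ^ j)%N - dconv_prod G (p ^ j)%N) *
    ((p%:R `^ beta)^-1) ^+ j.
Proof.
move=> p_pr; apply: eq_big_nat => j _.
rewrite f_eq ?g_eq ?expn_gt0 ?prime_gt0 //; congr (_ * _).
by rewrite exprVn mulrC powRrM powR_mulrn ?powR_ge0.
Qed.

Lemma sum_pweight_dquot_le p N : (d <= N)%N ->
  \sum_(e < N.+1) pweight beta (dquot F G) p e <=
  1 + K * (if prime p then Dterm beta d f g p else 0).
Proof.
move=> dN; rewrite /pweight; have [p_pr|_] := boolP (prime p); last first.
  by rewrite mulr0 addr0 big_ord_recl /= big1 ?addr0.
have /andP[x_ge0 x_le] := pinv_bounds p_pr.
under eq_bigr do rewrite dquot_pfactor //.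
apply: le_trans (sum_dquot_local_bound F_cm G_cm F_le1 G_le1 p_pr x_ge0
  (le_lt_trans x_le x2_lt1) dN) _.
rewrite lerD2l Dterm_dconv_prod //; apply: ler_wpM2r.
  by apply: sumr_ge0 => j _; rewrite mulr_ge0 ?cmod_ge0 ?exprn_ge0.
rewrite ler_wpM2l ?mulr_ge0 ?exprn_ge0 //; apply: lerXn2r.
- by rewrite nnegrE invr_ge0 subr_ge0 ltW // (le_lt_trans x_le).
- by rewrite nnegrE invr_ge0 subr_ge0 ltW.
by rewrite lef_pV2 ?posrE ?subr_gt0 ?(le_lt_trans x_le) // lerD2l lerN2.
Qed.

Lemma dquot_series_bounded : Dhat_finite beta d f g ->
  exists M, forall N, \sum_(1 <= a < N.+1) cmod (dquot F G a) * (a%:R `^ beta)^-1 <= M.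
Proof.
case=> D D_le; exists (expR (K * D)) => N.
pose N' := (N + d)%N; have dN' : (d <= N')%N by rewrite leq_addl.
have h_mul := multiplicative_dquot F G.
apply: (@le_trans _ _ (\sum_(n < N'.+1 | (0 < n)%N) cmod (dquot F G n) * (n%:R `^ beta)^-1)).
  rewrite big_geq_mkord (big_ord_widen_cond N'.+1 (fun n => true && (0 < n)%N)
    (fun n => cmod (dquot F G n) * (n%:R `^ beta)^-1)) ?ltnS ?leq_addr //.
  rewrite big_mkcond [leRHS]big_mkcond /=; apply: ler_sum => n _.
  case: ifP => [/andP[n_gt0 _]|_]; first by rewrite n_gt0.
  by case: ifP => // _; rewrite mulr_ge0 ?cmod_ge0 // invr_ge0 powR_ge0.
apply: le_trans (sum_le_euler_product beta h_mul N') _.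
apply: (@le_trans _ _ (\prod_(p < N'.+1) (1 + K * (if prime p then Dterm beta d f g p else 0)))).
  apply: ler_prod => p _; rewrite sumr_ge0 /=; last by move=> e _; apply: pweight_ge0.
  exact: sum_pweight_dquot_le.
have Kc_ge0 (p : 'I_N'.+1) : 0 <= K * (if prime p then Dterm beta d f g p else 0).
  by case: ifP => _; rewrite mulr_ge0 ?K_ge0 ?Dterm_ge0.
apply: le_trans (prod1D_le_expR Kc_ge0) _.
rewrite ler_expR -mulr_sumr ler_wpM2l ?K_ge0 // -big_mkcond /=.
exact: D_le.
Qed.

End DquotSeries.

Section PartialSums.
Variable R : realType.
Implicit Types u v : arith R.

Lemma dconvS u v X : dconv u v X.+1 =
  \sum_(1 <= k < X.+1) (if (k %| X.+1)%N then u k * v (X.+1 %/ k)%N else 0) + u X.+1 * v 1%N.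
Proof.
rewrite /dconv big_mkcond.
rewrite -(big_mkord xpredT (fun k => if (0 < k)%N && (k %| X.+1)%N then u k * v (X.+1 %/ k)%N else 0)).
rewrite big_ltn // /= add0r big_nat_recr //= dvdnn divnn /=.
by congr (_ + _); apply: eq_big_nat => k /andP[k_gt0 _]; rewrite k_gt0.
Qed.

Lemma sum_dconv u v X : \sum_(1 <= n < X.+1) dconv u v n =
  \sum_(1 <= a < X.+1) u a * \sum_(1 <= b < (X %/ a).+1) v b.
Proof.
elim: X => [|X IHX]; first by rewrite !big_geq.
rewrite big_nat_recr //= IHX dconvS [RHS]big_nat_recr //= divnn /= big_nat1 addrA.
congr (_ + _); rewrite -big_split /=; apply: eq_big_nat => a /andP[a_gt0 _].
rewrite divnS //; case: ifP => a_dvd /=; last by rewrite add0n addr0.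
by rewrite add1n [in RHS]big_nat_recr //= mulrDr a_dvd add1n.
Qed.

Lemma floor_natP (y : R) : 0 <= y ->
  (`|Num.floor y|%N)%:R <= y < (`|Num.floor y|%N).+1%:R.
Proof.
move=> y_ge0; have e : Num.floor y = (`|Num.floor y|%N)%:Z by rewrite gez0_abs ?floor_ge0.
by have := floor_itv y; rewrite [in X in X -> _]e intrD -natr1.
Qed.

Lemma floor_divn (x : R) a : 0 <= x -> (0 < a)%N ->
  `|Num.floor (x / a%:R)|%N = (`|Num.floor x|%N %/ a)%N.
Proof.
move=> x_ge0 a_gt0; have /andP[lex ltx] := floor_natP x_ge0.
have a_pos : (0 : R) < a%:R by rewrite ltr0n.
suff -> : Num.floor (x / a%:R) = (`|Num.floor x|%N %/ a)%N%:Z by [].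
apply: floor_def; apply/andP; split.
  by rewrite ler_pdivlMr // -natrM (le_trans _ lex) // ler_nat leq_divM.
by rewrite intrD natr1 ltr_pdivrMr // -natrM (lt_le_trans ltx) // ler_nat ltn_ceil.
Qed.

Lemma Ssum_dconv u v x : 0 <= x ->
  Ssum (dconv u v) x = \sum_(1 <= a < `|Num.floor x|%N.+1) u a * Ssum v (x / a%:R).
Proof.
move=> x_ge0; rewrite /Ssum sum_dconv; apply: eq_big_nat => a /andP[a_gt0 _].
by rewrite floor_divn.
Qed.

Lemma eq_Sbound u v alpha : (forall n, (0 < n)%N -> u n = v n) ->
  Sbound u alpha -> Sbound v alpha.
Proof.
move=> uv [C hC]; exists C => x x_ge1.
have <- : Ssum u x = Ssum v x by apply: eq_big_nat => n /andP[n_gt0 _]; apply: uv.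
exact: hC.
Qed.

Lemma powR_div_le (x a alpha beta gamma : R) : 1 <= a -> a <= x ->
  alpha <= gamma -> beta <= gamma -> (x / a) `^ alpha <= x `^ gamma * (a `^ beta)^-1.
Proof.
move=> a_ge1 ax le_ag le_bg; have a_gt0 := lt_le_trans ltr01 a_ge1.
have xa_ge1 : 1 <= x / a by rewrite ler_pdivlMr // mul1r.
apply: le_trans (ler_powR xa_ge1 le_ag) _.
have a_ge0 := ltW a_gt0; have x_ge0 := le_trans a_ge0 ax.
rewrite powRM ?invr_ge0 // powR_invr // ler_wpM2l ?powR_ge0 //.
by rewrite lef_pV2 ?posrE ?powR_gt0 // ler_powR.
Qed.

Lemma Sbound_dconv u v alpha beta M :
  (forall N, \sum_(1 <= a < N.+1) cmod (u a) * (a%:R `^ beta)^-1 <= M) ->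
  Sbound v alpha -> Sbound (dconv u v) (Num.max alpha beta).
Proof.
move=> u_le [C hC]; set gamma := Num.max alpha beta.
have C_ge0 : 0 <= C by have := hC 1 (lexx 1); rewrite powR1 mulr1; apply: le_trans (cmod_ge0 _).
exists (C * M) => x x_ge1; have x_ge0 := le_trans ler01 x_ge1.
have /andP[floor_le _] := floor_natP x_ge0.
rewrite Ssum_dconv //; apply: le_trans (cmod_sum _ _ _) _.
apply: (@le_trans _ _ (\sum_(1 <= a < `|Num.floor x|%N.+1)
  C * x `^ gamma * (cmod (u a) * (a%:R `^ beta)^-1))).
  apply: ler_sum_nat => a /andP[a_ge1 aX]; rewrite cmodM mulrCA ler_wpM2l ?cmod_ge0 //.
  have a_le_x : (a%:R : R) <= x by apply: le_trans floor_le; rewrite ler_nat -ltnS.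
  apply: le_trans (hC _ _) _; first by rewrite ler_pdivlMr ?ltr0n // mul1r.
  rewrite -mulrA ler_wpM2l // powR_div_le ?ler1n //.
  - by rewrite le_max lexx.
  - by rewrite le_max lexx orbT.
by rewrite -mulr_sumr mulrAC ler_wpM2r ?powR_ge0 // ler_wpM2l.
Qed.

End PartialSums.

Unset Implicit Arguments.

Theorem theorem4 (R : realType) (d : nat) (f g : arith R) (alpha beta : R) :
  in_S d f -> in_S d g -> 0 < beta -> Dhat_finite beta d f g ->
  Sbound f alpha -> Sbound g (Num.max alpha beta).
Proof.
move=> [F [F_cm [F_le1 f_eq]]] [G [G_cm [G_le1 g_eq]]] beta_gt0 D_fin f_bound.
have [M h_le] := dquot_series_bounded F_cm G_cm F_le1 G_le1 f_eq g_eq beta_gt0 D_fin.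
have g_dconv n : (0 < n)%N -> dconv (dquot F G) f n = g n.
  by move=> n_gt0; rewrite (eq_dconv _ f_eq n_gt0) (dconv_dquot F_cm G_cm n_gt0) g_eq.
exact: eq_Sbound g_dconv (Sbound_dconv h_le f_bound).
Qed.
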